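(* Let $\gamma\in F=PSL(2,\mathbb Z)$ be a hyperbolic element (i.e. acting as a hyperbolic isometry of $\mathbb H^2$). Then there exist two sequences $\{U_n^+\}_{n\in\mathbb N}$ and $\{U_n^-\}_{n\in\mathbb N}$ of connected subsets of $B$ such that $\{U_n^+\}$ is a vanishing sequence for the action of $\gamma$ on $B$, $\{U_n^-\}$ is a vanishing sequence for $\gamma^{-1}$, and $U_0^+\cap U_0^-=\emptyset$.
   Context: $B=\mathbb{QP}^1$ is the vertex set of the Farey tessellation of $\mathbb H^2$, with the action of $F=PSL(2,\mathbb Z)$, and $T$ is the dual trivalent tree. A quadribone is the set of four vertices of two adjacent ideal triangles (corresponding to an edge of $T$); $A\subset B$ is connected if it is a union of quadribones whose corresponding edges form a connected subset of $T$. For a map $\gamma:X\to X$ of a topological space (here $X=B$ with the discrete topology), a sequence of non-empty subsets $\{V_n\}$ is a vanishing sequence for $\gamma$ if $V_{n+1}\subset V_n$, $\bigcap_n V_n=\emptyset$, and for every compact $K\subset X$ and every $n$ there exists $p\in\mathbb N$ with $\gamma^p(K)\subset V_n$. *)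

From mathcomp Require Import all_boot all_order all_algebra.
Set Implicit Arguments. Unset Strict Implicit. Unset Printing Implicit Defensive.
Import Order.TTheory GRing.Theory Num.Theory.
Local Open Scope ring_scope.

(* B = QP^1 : a rational point (Some x) or the point at infinity (None). *)
Definition B := option rat.

(* Reduced homogeneous coordinates (p,q), gcd 1, q > 0, infinity = (1,0). *)
Definition bnum (x : B) : int := if x is Some r then numq r else 1.
Definition bden (x : B) : int := if x is Some r then denq r else 0.

(* The point of QP^1 with homogeneous coordinates (p,q) (assumed not (0,0)). *)
Definition bpt (p q : int) : B :=
  if q == 0 then None else Some (p%:~R / q%:~R).

(* Farey adjacency: x, y span an edge of the Farey tessellation. *)
Definition farey_adj (x y : B) : Prop :=
  `|bnum x * bden y - bnum y * bden x| = 1.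

(* Edges of the Farey tessellation, given as ordered pairs of endpoints;
   each edge of the Farey tessellation is dual to exactly one edge of T. *)
Definition edge := (B * B)%type.
Definition farey_edge (e : edge) : Prop := farey_adj e.1 e.2.

(* Quadribone of a Farey edge {a/b, c/d}: its endpoints plus the third
   vertices (a+c)/(b+d) and (a-c)/(b-d) of the two adjacent ideal triangles. *)
Definition quadribone (e : edge) (z : B) : Prop :=
  z = e.1 \/ z = e.2 \/
  z = bpt (bnum e.1 + bnum e.2) (bden e.1 + bden e.2) \/
  z = bpt (bnum e.1 - bnum e.2) (bden e.1 - bden e.2).

(* Two edges of T are adjacent (share a vertex of T, i.e. an ideal triangle)
   iff the dual Farey edges are two distinct sides of one Farey triangle. *)
Definition T_adj (e f : edge) : Prop :=
  exists x y z : B, [/\ farey_adj x y, farey_adj x z, farey_adj y z & y <> z] /\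
    (e = (x, y) \/ e = (y, x)) /\ (f = (x, z) \/ f = (z, x)).

Inductive T_chain (E : edge -> Prop) : edge -> edge -> Prop :=
| T_chain_refl e : E e -> T_chain E e e
| T_chain_step e f g : T_chain E e f -> E g -> T_adj f g -> T_chain E e g.

Definition T_connected (E : edge -> Prop) : Prop :=
  (forall e, E e -> farey_edge e) /\ (forall e f, E e -> E f -> T_chain E e f).

Definition connectedB (A : B -> Prop) : Prop :=
  exists E : edge -> Prop, T_connected E /\
    (forall z, A z <-> exists e, E e /\ quadribone e z).

Definition mobius (a b c d : int) (x : B) : B :=
  bpt (a * bnum x + b * bden x) (c * bnum x + d * bden x).

(* Vanishing sequence for gam : B -> B, B discrete: compact = finite,
   a finite subset being given by a list of its elements. *)
Definition vanishing (gam : B -> B) (V : nat -> B -> Prop) : Prop :=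
  [/\ (forall n, exists x, V n x),
      (forall n x, V n.+1 x -> V n x),
      (forall x, ~ (forall n, V n x)) &
      (forall (K : seq B) (n : nat), exists p : nat,
          (0 < p)%N /\ forall x, x \in K -> V n (iter p gam x))].

From mathcomp Require Import all_boot all_order all_algebra.
From mathcomp Require Import zify.
From mathcomp.algebra_tactics Require Import ring.
From Stdlib Require Import FunctionalExtensionality Classical.
Set Implicit Arguments. Unset Strict Implicit. Unset Printing Implicit Defensive.
Import Order.TTheory GRing.Theory Num.Theory.
Local Open Scope ring_scope.

(* After replacing gamma by -gamma, which acts in the same way on B, the trace
   is at least 3.  Matrices of determinant +-1 act on B preserving Farey edges
   and quadribones, hence connected sets, and conjugation transports vanishing
   sequences; conjugating by translations and by the swap of coordinates
   reduces |c| until gamma becomes a matrix M with positive entries.  For such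
   M the arc P = [0, oo] is connected and M maps it into p, q > 0, so
   U_n^+ = M^(n+1) P decreases.  Every point of B enters P under some power of
   M, because off P the gap q - p of its coordinates at least halves under M,
   while on P the size p + q at least halves under M^-1, so no point stays in
   all the U_n^+.  The same construction for M^-1, twisted by diag(1, -1),
   gives U_n^- inside the quadrant p < 0 < q. *)


(** * Homogeneous coordinates *)

Lemma pm1_of_mul_pm1 (k t : int) : k * t = 1 \/ k * t = -1 -> k = 1 \/ k = -1.
Proof.
have : k <= -2 \/ k = -1 \/ k = 0 \/ k = 1 \/ 2 <= k by lia.
have : t <= -1 \/ t = 0 \/ 1 <= t by lia.
by move=> [?|[?|?]] [?|[?|[?|[?|?]]]]; subst; nia.
Qed.

Lemma bptK x : bpt (bnum x) (bden x) = x.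
Proof. by case: x => [r|] //=; rewrite /bpt (negbTE (denq_neq0 r)) divq_num_den. Qed.

Lemma coords_inj x y : bnum x = bnum y -> bden x = bden y -> x = y.
Proof. by move=> en ed; rewrite -(bptK x) -(bptK y) en ed. Qed.

Lemma bden_ge0 x : 0 <= bden x.
Proof. case: x => [r|] //=; exact: ltW (denq_gt0 r). Qed.

Lemma bnum_bden0 x : bden x = 0 -> bnum x = 1.
Proof. by case: x => [r|] //= H; move: (denq_neq0 r); rewrite H. Qed.

Lemma coords_neq0 x : bnum x != 0 \/ bden x != 0.
Proof. by case: (bden x =P 0) => [/bnum_bden0 ->|/eqP]; [left | right]. Qed.

Lemma bptZ k p q : k != 0 -> bpt (k * p) (k * q) = bpt p q.
Proof.
move=> kn; rewrite /bpt mulf_eq0 (negbTE kn) /=.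
case: (q =P 0) => // /eqP qn; congr Some.
have qn' : (q%:~R : rat) != 0 by rewrite intr_eq0.
have kn' : (k%:~R : rat) != 0 by rewrite intr_eq0.
by rewrite !intrM; field; rewrite qn' kn'.
Qed.

Lemma bpt_sign e p q : e = 1 \/ e = -1 -> bpt (e * p) (e * q) = bpt p q.
Proof. by move=> He; apply: bptZ; case: He => ->. Qed.

Lemma bptN p q : bpt (- p) (- q) = bpt p q.
Proof. by rewrite -(@bpt_sign (-1) p q (or_intror erefl)) !mulN1r. Qed.

Lemma bpt_coords p q : p != 0 \/ q != 0 ->
  exists k, [/\ k != 0, p = k * bnum (bpt p q) & q = k * bden (bpt p q)].
Proof.
move=> nz; rewrite /bpt; case: (q =P 0) nz => [->|/eqP qn] nz /=.
  by exists p; case: nz => [pn|] //; rewrite mulr1 mulr0.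
set r := p%:~R / q%:~R : rat.
have qn' : (q%:~R : rat) != 0 by rewrite intr_eq0.
have E : numq r * q = p * denq r.
  by apply: (@intr_inj rat); rewrite !intrM numqE /r; field.
have : (denq r %| q * numq r)%Z by apply/dvdzP; exists p; rewrite mulrC E mulrC.
rewrite Gauss_dvdzl; last by rewrite coprimezE coprime_sym coprime_num_den.
case/dvdzP => k Hk; exists k; split => //.
- by apply: contra qn => /eqP k0; rewrite Hk k0 mul0r.
- by apply: (mulIf (denq_neq0 r)); rewrite -E Hk; ring.
Qed.

Lemma bpt_primitive p q r s : 0 <= p -> 0 <= q ->
  p * s - q * r = 1 \/ p * s - q * r = -1 ->
  bnum (bpt p q) = p /\ bden (bpt p q) = q.
Proof.
move=> hp hq hD.
have nz : p != 0 \/ q != 0.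
  case: (p =P 0) => [p0|/eqP]; last by left.
  by right; apply/eqP => q0; move: hD; rewrite p0 q0; lia.
have [k [kn E1 E2]] := bpt_coords nz.
have hd := bden_ge0 (bpt p q); have h0 := @bnum_bden0 (bpt p q).
set P := bpt p q in E1 E2 hd h0 *.
have [k1|k_1] : k = 1 \/ k = -1.
- apply: (pm1_of_mul_pm1 (t := bnum P * s - bden P * r)).
  suff -> : k * (bnum P * s - bden P * r) = p * s - q * r by [].
  by rewrite [in RHS]E1 [in RHS]E2; ring.
- by rewrite k1 !mul1r in E1 E2.
have d0 : bden P = 0 by lia.
by move: E1; rewrite h0 // k_1; lia.
Qed.

Lemma bnum_bpt_ge0 p q : 0 <= p -> 0 <= q -> p != 0 \/ q != 0 ->
  0 <= bnum (bpt p q).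
Proof.
move=> hp hq nz; have [k [kn E1 E2]] := bpt_coords nz.
have hd := bden_ge0 (bpt p q).
case: (bden (bpt p q) =P 0) => [/bnum_bden0 -> // | dn].
have kp : 0 < k by nia.
nia.
Qed.

Lemma bezout_coords x : exists r s, bnum x * s - bden x * r = 1.
Proof.
case: x => [x|] /=; last by exists 0, 1; ring.
have : coprimez (numq x) (denq x) by rewrite coprimezE coprime_num_den.
case/coprimezP => [[u v]] /= H.
by exists (- v), u; rewrite -H; ring.
Qed.

(** * Farey edges and the dual tree *)

Lemma farey_adj_pm1 x y : farey_adj x y ->
  bnum x * bden y - bnum y * bden x = 1 \/ bnum x * bden y - bnum y * bden x = -1.
Proof. by rewrite /farey_adj; lia. Qed.

Lemma farey_adj_comb_neq0 s x y : s = 1 \/ s = -1 -> farey_adj x y ->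
  bnum x + s * bnum y != 0 \/ bden x + s * bden y != 0.
Proof.
rewrite /farey_adj => Hs H.
case: (bnum x + s * bnum y =P 0) => [E1|/eqP]; last by left.
case: (bden x + s * bden y =P 0) => [E2|/eqP]; last by right.
by move: H; case: Hs => Hs; move: E1 E2; rewrite Hs; nia.
Qed.

Lemma farey_pair_comparable (p1 q1 p2 q2 : int) :
  0 <= p1 -> 0 <= q1 -> 0 <= p2 -> 0 <= q2 ->
  p1 * q2 - p2 * q1 = 1 \/ p1 * q2 - p2 * q1 = -1 ->
  ~ (q1 = 0 /\ p2 = 0) -> ~ (p1 = 0 /\ q2 = 0) ->
  (p2 <= p1 /\ q2 <= q1) \/ (p1 <= p2 /\ q1 <= q2).
Proof.
move=> h1 h2 h3 h4 hD n1 n2.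
have [a1|a1] := lerP p2 p1; have [a2|a2] := lerP q2 q1; [by left | | | by right; lia].
- have : p1 * (q2 - q1) <= p1 * q2 - p2 * q1 by nia.
  case: hD => hD; last by nia.
  have : p1 = 0 \/ p1 = 1 by nia.
  case=> ?; subst p1; first by nia.
  have : p2 = 0 \/ p2 = 1 by lia.
  by case=> ?; subst p2; [by case: n1; split; nia | right; lia].
- have : q1 * (p2 - p1) <= p2 * q1 - p1 * q2 by nia.
  case: hD => hD; first by nia.
  have : q1 = 0 \/ q1 = 1 by nia.
  case=> ?; subst q1; first by nia.
  have : q2 = 0 \/ q2 = 1 by lia.
  by case=> ?; subst q2; [by case: n2; split; nia | right; lia].
Qed.

Lemma T_adj_sym e f : T_adj e f -> T_adj f e.
Proof.
case=> x [y [z [[Hxy Hxz Hyz Nyz] [He Hf]]]]; exists x, z, y; split => //.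
by split => //; [move: Hyz; rewrite /farey_adj; lia | move=> E; apply: Nyz].
Qed.

Lemma T_adj_swapl x y f : T_adj (x, y) f -> T_adj (y, x) f.
Proof.
case=> u [v [w [Hf [He Hg]]]]; exists u, v, w; split => //; split => //.
by case: He => [[-> ->]|[-> ->]]; [right | left].
Qed.

Lemma T_adj_swapr e x y : T_adj e (x, y) -> T_adj e (y, x).
Proof. by move=> /T_adj_sym /T_adj_swapl /T_adj_sym. Qed.

Lemma T_chain_src E e f : T_chain E e f -> E e.
Proof. by elim. Qed.

Lemma T_chain_trans E e f g : T_chain E e f -> T_chain E f g -> T_chain E e g.
Proof.
move=> H1 H2; elim: H2 H1 => // f0 g0 h0 _ IH Eh Ha H1.
exact: T_chain_step (IH H1) Eh Ha.
Qed.

Lemma T_chain_sym E e f : T_chain E e f -> T_chain E f e.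
Proof.
elim=> [e0 He|e0 f0 g0 _ IH Eg Ha]; first exact: T_chain_refl.
exact: T_chain_trans (T_chain_step (T_chain_refl Eg) (T_chain_src IH) (T_adj_sym Ha)) IH.
Qed.

(** * The action of unimodular matrices *)

Definition unimodular (a b c d : int) := a * d - b * c = 1 \/ a * d - b * c = -1.

Lemma unimodular_adj a b c d : unimodular a b c d -> unimodular d (- b) (- c) a.
Proof. by rewrite /unimodular; have -> : d * a - - b * - c = a * d - b * c by ring. Qed.

Lemma unimodular_vec_neq0 a b c d p q : unimodular a b c d -> p != 0 \/ q != 0 ->
  a * p + b * q != 0 \/ c * p + d * q != 0.
Proof.
move=> U nz.
case: (a * p + b * q =P 0) => [E1|/eqP]; last by left.
case: (c * p + d * q =P 0) => [E2|/eqP]; last by right.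
have Ep : (a * d - b * c) * p = 0.
  by transitivity (d * (a * p + b * q) - b * (c * p + d * q)); [ring | rewrite E1 E2; ring].
have Eq : (a * d - b * c) * q = 0.
  by transitivity (a * (c * p + d * q) - c * (a * p + b * q)); [ring | rewrite E1 E2; ring].
by case: nz; case: U => U; move: Ep Eq; rewrite U; lia.
Qed.

Lemma mobius_coords a b c d x : unimodular a b c d ->
  exists e, [/\ e = 1 \/ e = -1,
    a * bnum x + b * bden x = e * bnum (mobius a b c d x) &
    c * bnum x + d * bden x = e * bden (mobius a b c d x)].
Proof.
move=> U; set p := bnum x; set q := bden x.
have [k [kn E1 E2]] := bpt_coords (unimodular_vec_neq0 U (coords_neq0 x)).
exists k; split => //.
have [r [s Hrs]] := bezout_coords x.
set y := mobius a b c d x.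
apply: (pm1_of_mul_pm1 (t := bnum y * (c * r + d * s) - bden y * (a * r + b * s))).
have -> : k * (bnum y * (c * r + d * s) - bden y * (a * r + b * s)) =
  (a * d - b * c) * (p * s - q * r).
  transitivity ((k * bnum y) * (c * r + d * s) - (k * bden y) * (a * r + b * s)); first ring.
  by rewrite -E1 -E2; ring.
by rewrite Hrs mulr1.
Qed.

Lemma mobius_bpt a b c d p q : p != 0 \/ q != 0 ->
  mobius a b c d (bpt p q) = bpt (a * p + b * q) (c * p + d * q).
Proof.
move=> nz; have [k [kn E1 E2]] := bpt_coords nz.
rewrite /mobius; set P := bpt p q in E1 E2 *.
rewrite [in RHS]E1 [in RHS]E2 -(bptZ _ _ kn); congr bpt; ring.
Qed.

Lemma mobius_comp a1 b1 c1 d1 a2 b2 c2 d2 x : unimodular a2 b2 c2 d2 ->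
  mobius a1 b1 c1 d1 (mobius a2 b2 c2 d2 x) =
  mobius (a1 * a2 + b1 * c2) (a1 * b2 + b1 * d2)
         (c1 * a2 + d1 * c2) (c1 * b2 + d1 * d2) x.
Proof.
move=> U; have [e [He E1 E2]] := mobius_coords x U.
set u := mobius a2 b2 c2 d2 x in E1 E2 *.
rewrite /mobius -(bpt_sign _ _ He); congr bpt.
- transitivity (a1 * (e * bnum u) + b1 * (e * bden u)); first ring.
  by rewrite -E1 -E2; ring.
- transitivity (c1 * (e * bnum u) + d1 * (e * bden u)); first ring.
  by rewrite -E1 -E2; ring.
Qed.

Lemma mobius1 x : mobius 1 0 0 1 x = x.
Proof. by rewrite /mobius !mul1r !mul0r addr0 add0r bptK. Qed.

Lemma mobiusN a b c d : mobius (- a) (- b) (- c) (- d) = mobius a b c d.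
Proof.
apply: functional_extensionality => x; rewrite /mobius -bptN; congr bpt; ring.
Qed.

Lemma mobius_scalar_id e : e = 1 \/ e = -1 -> mobius e 0 0 e =1 id.
Proof. by case=> -> x; rewrite ?mobius1 // -[0]oppr0 mobiusN mobius1. Qed.

Lemma mobius_sign e a b c d : e = 1 \/ e = -1 ->
  mobius (e * a) (e * b) (e * c) (e * d) = mobius a b c d.
Proof. by case=> ->; rewrite ?mul1r // !mulN1r mobiusN. Qed.

Lemma mobius_adjK p q r s : unimodular p q r s ->
  cancel (mobius p q r s) (mobius s (- q) (- r) p).
Proof.
move=> U x; rewrite mobius_comp // -[RHS](mobius_scalar_id U x); congr mobius; ring.
Qed.

Lemma mobius_adjKV p q r s : unimodular p q r s ->
  cancel (mobius s (- q) (- r) p) (mobius p q r s).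
Proof.
move=> U x; rewrite mobius_comp; last exact: unimodular_adj.
by rewrite -[RHS](mobius_scalar_id U x); congr mobius; ring.
Qed.

Lemma mobius_farey_adj a b c d x y : unimodular a b c d -> farey_adj x y ->
  farey_adj (mobius a b c d x) (mobius a b c d y).
Proof.
rewrite /farey_adj => U H.
have [e1 [He1 E1 E2]] := mobius_coords x U.
have [e2 [He2 F1 F2]] := mobius_coords y U.
set u := mobius a b c d x in E1 E2 *; set w := mobius a b c d y in F1 F2 *.
have K : e1 * e2 * (bnum u * bden w - bnum w * bden u) =
    (a * d - b * c) * (bnum x * bden y - bnum y * bden x).
  transitivity ((e1 * bnum u) * (e2 * bden w) - (e2 * bnum w) * (e1 * bden u)); first ring.
  by rewrite -E1 -E2 -F1 -F2; ring.
by move: K H; case: U => ->; case: He1 => ->; case: He2 => ->; lia.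
Qed.

(* The vectors x +- y map to u +- w up to the signs of the representing
   vectors, so the third vertices go to third vertices. *)
Lemma mobius_quadribone a b c d e z : unimodular a b c d -> farey_edge e ->
  quadribone e z ->
  quadribone (mobius a b c d e.1, mobius a b c d e.2) (mobius a b c d z).
Proof.
case: e => x y /= U H.
have [e1 [He1 E1 E2]] := mobius_coords x U.
have [e2 [He2 F1 F2]] := mobius_coords y U.
set u := mobius a b c d x in E1 E2 *; set w := mobius a b c d y in F1 F2 *.
have third s : s = 1 \/ s = -1 ->
    mobius a b c d (bpt (bnum x + s * bnum y) (bden x + s * bden y)) =
      bpt (bnum u + bnum w) (bden u + bden w) \/
    mobius a b c d (bpt (bnum x + s * bnum y) (bden x + s * bden y)) =
      bpt (bnum u - bnum w) (bden u - bden w).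
  move=> Hs; rewrite mobius_bpt; last exact: farey_adj_comb_neq0.
  have -> : a * (bnum x + s * bnum y) + b * (bden x + s * bden y) =
    (a * bnum x + b * bden x) + s * (a * bnum y + b * bden y) by ring.
  have -> : c * (bnum x + s * bnum y) + d * (bden x + s * bden y) =
    (c * bnum x + d * bden x) + s * (c * bnum y + d * bden y) by ring.
  rewrite E1 E2 F1 F2.
  by case: Hs He1 He2 => -> [->|->] [->|->]; rewrite ?(mul1r, mulN1r, opprK) -?opprD ?bptN;
    first [by left | by right | by right; rewrite -[RHS]bptN; congr bpt; ring].
rewrite /quadribone /=; case=> [->|[->|[->|->]]]; [by left | by right; left | |].
- by right; right; have := third 1 (or_introl erefl); rewrite !mul1r.
- by right; right; have := third (-1) (or_intror erefl); rewrite !mulN1r.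
Qed.

(** * Transport by conjugation *)

Section Transport.
Variables g h : B -> B.
Hypothesis ghK : cancel h g.
Hypothesis hgK : cancel g h.
Hypothesis h_adj : forall x y, farey_adj x y -> farey_adj (h x) (h y).
Hypothesis h_quad : forall e z, farey_edge e -> quadribone e z ->
  quadribone (h e.1, h e.2) (h z).
Hypothesis g_quad : forall e z, farey_edge e -> quadribone e z ->
  quadribone (g e.1, g e.2) (g z).

Let hE (e : edge) : edge := (h e.1, h e.2).
Let gE (e : edge) : edge := (g e.1, g e.2).

Lemma T_adj_map e f : T_adj e f -> T_adj (hE e) (hE f).
Proof.
case=> x [y [z [[Hxy Hxz Hyz Nyz] [He Hf]]]].
exists (h x), (h y), (h z); split.
  by split; try exact: h_adj; apply: contra_not Nyz => /(can_inj ghK).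
by split; [case: He => ->; [left|right] | case: Hf => ->; [left|right]].
Qed.

Lemma connectedB_preimage (A : B -> Prop) :
  connectedB A -> connectedB (fun z => A (g z)).
Proof.
case=> E [[E_farey E_chain] HA].
have hgE e : hE (gE e) = e by case: e => x y; rewrite /hE /gE /= !hgK.
have ghE e : gE (hE e) = e by case: e => x y; rewrite /hE /gE /= !ghK.
have gE_farey e : E (gE e) -> farey_edge e.
  by move=> /E_farey /h_adj; rewrite /farey_edge !hgK.
have chain_map e f : T_chain E e f -> T_chain (fun e => E (gE e)) (hE e) (hE f).
  elim=> [e0 He0 | e0 f0 g0 _ IH Hg Ha]; first by apply: T_chain_refl; rewrite ghE.
  by apply: T_chain_step IH _ (T_adj_map Ha); rewrite ghE.
exists (fun e => E (gE e)); split; first split.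
- exact: gE_farey.
- by move=> e f /(E_chain _ _) H /H /chain_map; rewrite !hgE.
- move=> z; split.
    case/HA => e [He Hq]; exists (hE e); rewrite ghE; split => //.
    by rewrite -(hgK z); apply: h_quad => //; exact: E_farey.
  by case=> e [He Hq]; apply/HA; exists (gE e); split => //; apply: g_quad => //; exact: gE_farey.
Qed.

End Transport.

Lemma vanishing_conj (g h f f' : B -> B) V : cancel g h ->
  (forall x, f' x = g (f (h x))) ->
  vanishing f V -> vanishing f' (fun n z => V n (h z)).
Proof.
move=> hgK Hf [V_ne V_dec V_cap V_abs]; split.
- by move=> n; have [x Hx] := V_ne n; exists (g x); rewrite hgK.
- by move=> n x; apply: V_dec.
- by move=> x; apply: V_cap.
- move=> K n; have [p [p0 Hp]] := V_abs (map h K) n.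
  exists p; split => // x xK.
  have -> : h (iter p f' x) = iter p f (h x).
    by elim: p {p0 Hp} => [|p IH] //=; rewrite Hf hgK IH.
  by apply: Hp; exact: map_f.
Qed.

Lemma connectedB_mobius_preimage p q r s (A : B -> Prop) : unimodular p q r s ->
  connectedB A -> connectedB (fun z => A (mobius p q r s z)).
Proof.
move=> U; have U' := unimodular_adj U.
apply: (connectedB_preimage (h := mobius s (- q) (- r) p)).
- exact: mobius_adjKV.
- exact: mobius_adjK.
- by move=> x y; apply: mobius_farey_adj.
- by move=> e z; apply: mobius_quadribone.
- by move=> e z; apply: mobius_quadribone.
Qed.

Definition vanishing_pair (a b c d : int) : Prop :=
  exists Up Um : nat -> B -> Prop,
    (forall n, connectedB (Up n)) /\ (forall n, connectedB (Um n)) /\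
    vanishing (mobius a b c d) Up /\
    vanishing (mobius d (- b) (- c) a) Um /\
    (forall x, ~ (Up 0%N x /\ Um 0%N x)).

Lemma vanishing_pairN a b c d :
  vanishing_pair (- a) (- b) (- c) (- d) -> vanishing_pair a b c d.
Proof. by rewrite /vanishing_pair !mobiusN. Qed.

Lemma unimodular_det_sqr p q r s : unimodular p q r s ->
  (p * s - q * r) * (p * s - q * r) = 1.
Proof. by case=> ->. Qed.

Lemma mobius_conj p q r s a b c d : unimodular p q r s -> unimodular a b c d ->
  let e := p * s - q * r in forall x,
  mobius a b c d x = mobius s (- q) (- r) p
    (mobius (e * ((p * a + q * c) * s - (p * b + q * d) * r))
            (e * ((p * b + q * d) * p - (p * a + q * c) * q))
            (e * ((r * a + s * c) * s - (r * b + s * d) * r))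
            (e * ((r * b + s * d) * p - (r * a + s * c) * q))
      (mobius p q r s x)).
Proof.
move=> UP UM e x; have ee : e * e = 1 by exact: unimodular_det_sqr.
have UPM : unimodular ((p * a + q * c) * s - (p * b + q * d) * r)
    ((p * b + q * d) * p - (p * a + q * c) * q)
    ((r * a + s * c) * s - (r * b + s * d) * r)
    ((r * b + s * d) * p - (r * a + s * c) * q).
  rewrite /unimodular; have -> : ((p * a + q * c) * s - (p * b + q * d) * r) *
    ((r * b + s * d) * p - (r * a + s * c) * q) -
    ((p * b + q * d) * p - (p * a + q * c) * q) *
    ((r * a + s * c) * s - (r * b + s * d) * r) =
    e * e * (a * d - b * c) by rewrite /e; ring.
  by rewrite ee mul1r.
rewrite mobius_sign // mobius_comp // mobius_comp //.
by rewrite -(mobius_sign a b c d (or_introl ee)); congr mobius; rewrite /e; ring.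
Qed.

(* [a' b'; c' d'] is the conjugate P M P^-1 of M = [a b; c d] by P = [p q; r s],
   written with P^-1 = (det P) adj P. *)
Lemma vanishing_pair_conj p q r s a b c d a' b' c' d' :
  unimodular p q r s -> unimodular a b c d ->
  a' = (p * s - q * r) * ((p * a + q * c) * s - (p * b + q * d) * r) ->
  b' = (p * s - q * r) * ((p * b + q * d) * p - (p * a + q * c) * q) ->
  c' = (p * s - q * r) * ((r * a + s * c) * s - (r * b + s * d) * r) ->
  d' = (p * s - q * r) * ((r * b + s * d) * p - (r * a + s * c) * q) ->
  vanishing_pair a' b' c' d' -> vanishing_pair a b c d.
Proof.
move=> UP UM -> -> -> -> [Up [Um [Cp [Cm [Vp [Vm D]]]]]].
exists (fun n z => Up n (mobius p q r s z)), (fun n z => Um n (mobius p q r s z)).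
split; first by move=> n; apply: connectedB_mobius_preimage.
split; first by move=> n; apply: connectedB_mobius_preimage.
split.
  by apply: vanishing_conj Vp; [exact: mobius_adjKV | exact: mobius_conj].
split; last by move=> x; apply: D.
apply: vanishing_conj Vm; [exact: mobius_adjKV |].
move=> x; rewrite (mobius_conj UP (unimodular_adj UM)).
by congr (mobius _ _ _ _ (mobius _ _ _ _ _)); ring.
Qed.

Lemma vanishing_pair_conjJ a b c d : a * d - b * c = 1 ->
  vanishing_pair a (- b) (- c) d -> vanishing_pair a b c d.
Proof.
by move=> det; apply: (@vanishing_pair_conj 1 0 0 (-1)); try ring;
  [by right; ring | by left].
Qed.

Lemma vanishing_pair_conjW a b c d : a * d - b * c = 1 ->
  vanishing_pair d c b a -> vanishing_pair a b c d.
Proof.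
by move=> det; apply: (@vanishing_pair_conj 0 1 1 0); try ring;
  [by right; ring | by left].
Qed.

Lemma vanishing_pair_conjT k a b c d : a * d - b * c = 1 ->
  vanishing_pair (a - k * c) (b + k * (a - d) - k * k * c) c (d + k * c) ->
  vanishing_pair a b c d.
Proof.
by move=> det; apply: (@vanishing_pair_conj 1 (- k) 0 1); try ring;
  [by left; ring | by left].
Qed.

(** * The arc [0, oo] is connected *)

Definition pos_half (x : B) : Prop := 0 <= bnum x.

(* The Farey edges inside the arc [0, oo] other than {0, oo} itself. *)
Definition pos_edge (e : edge) : Prop :=
  [/\ farey_edge e, pos_half e.1, pos_half e.2,
      ~ (bden e.1 = 0 /\ bnum e.2 = 0) & ~ (bnum e.1 = 0 /\ bden e.2 = 0)].

Definition edge_size (e : edge) : int := bnum e.1 + bden e.1 + bnum e.2 + bden e.2.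

Lemma pos_half_coords x : pos_half x -> 0 <= bden x /\ 1 <= bnum x + bden x.
Proof.
rewrite /pos_half => hx; have hd := bden_ge0 x; split => //.
by case: (eqVneq (bden x) 0) => [d0|]; [have := bnum_bden0 d0 | ]; lia.
Qed.

Lemma not_pos_half_coords x : ~ pos_half x -> bnum x < 0 /\ 0 < bden x.
Proof.
rewrite /pos_half => hx; have hd := bden_ge0 x.
by case: (eqVneq (bden x) 0) => [d0|]; [have := bnum_bden0 d0 | ]; lia.
Qed.

Lemma pos_edge_swap x y : pos_edge (x, y) -> pos_edge (y, x).
Proof.
rewrite /pos_edge /farey_edge /farey_adj /= => -[H hx hy n1 n2].
by split => //; [lia | case=> ? ?; apply: n2 | case=> ? ?; apply: n1].
Qed.

Lemma pos_edge_base :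
  [/\ pos_edge (Some 1, None), pos_edge (Some 1, Some 0),
      pos_edge (None, Some 1) & pos_edge (Some 0, Some 1)].
Proof. by split; split; rewrite /farey_edge /farey_adj /pos_half //=; case. Qed.

Lemma T_adj_base : T_adj (Some 1, None) (Some 1, Some 0) /\
  T_adj (Some 1, Some 0) (None, Some 1).
Proof.
split; [exists (Some 1), None, (Some 0) | exists (Some 1), (Some 0), None].
- by split; [split | split; left].
- by split; [split | split; [left | right]].
Qed.

(* Subtracting the smaller endpoint vector gives the Farey parent edge. *)
Lemma pos_edge_descent x y : pos_edge (x, y) ->
  bnum y <= bnum x -> bden y <= bden x ->
  (x = Some 1 /\ (y = Some 0 \/ y = None)) \/
  exists w, [/\ pos_edge (w, y), T_adj (w, y) (x, y) &
                edge_size (w, y) < edge_size (x, y)].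
Proof.
case=> /farey_adj_pm1 /= hD hx hy n1 n2 le_n le_d.
have [hdx sx] := pos_half_coords hx; have [hdy sy] := pos_half_coords hy.
set w := bpt (bnum x - bnum y) (bden x - bden y).
have [wn wd] : bnum w = bnum x - bnum y /\ bden w = bden x - bden y.
  by apply: (@bpt_primitive _ _ (bnum y) (bden y)); lia.
have Hwy : farey_adj w y by rewrite /farey_adj wn wd; lia.
have Hwx : w <> x.
  move=> wx; have := @bnum_bden0 y; move: wn wd; rewrite wx; lia.
have Tw : T_adj (w, y) (x, y).
  exists y, w, x; split; last by split; right.
  by split => //; rewrite /farey_adj ?wn ?wd; lia.
have [Pw|nPw] := classic (pos_edge (w, y)).
  by right; exists w; split => //; rewrite /edge_size /= wn wd; lia.
left; have hw : pos_half w by rewrite /pos_half wn; lia.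
have : (bden w = 0 /\ bnum y = 0) \/ (bnum w = 0 /\ bden y = 0).
  by apply: NNPP => H; apply: nPw; split => // [[? ?]|[? ?]]; apply: H; [left|right].
case=> [[w0 y0]|[w0 y0]].
- have x1 : bnum x = 1 by have := bnum_bden0 w0; lia.
  have dy : bden y = 1 by move: hD; rewrite x1 y0; lia.
  have dx : bden x = 1 by lia.
  by split; [|left]; apply: coords_inj; rewrite ?x1 ?dx ?y0 ?dy.
- have y1 := bnum_bden0 y0.
  have x1 : bnum x = 1 by lia.
  have dx : bden x = 1 by move: hD; rewrite x1 y0 y1; lia.
  by split; [|right]; apply: coords_inj; rewrite ?x1 ?dx ?y0 ?y1.
Qed.

Lemma pos_edge_chain_base :
  [/\ T_chain pos_edge (Some 1, None) (Some 1, None),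
      T_chain pos_edge (Some 1, None) (Some 1, Some 0),
      T_chain pos_edge (Some 1, None) (None, Some 1) &
      T_chain pos_edge (Some 1, None) (Some 0, Some 1)].
Proof.
have [P1i P10 Pi1 P01] := pos_edge_base; have [T1 T2] := T_adj_base.
have C10 := T_chain_step (T_chain_refl P1i) P10 T1.
split => //; first exact: T_chain_refl.
  exact: T_chain_step C10 Pi1 T2.
exact: T_chain_step (T_chain_refl P1i) P01 (T_adj_swapr T1).
Qed.

Lemma pos_edge_chain e : pos_edge e -> T_chain pos_edge (Some 1, None) e.
Proof.
have [C1i C10 Ci1 C01] := pos_edge_chain_base.
suff: forall n e, pos_edge e -> edge_size e <= n%:Z -> T_chain pos_edge (Some 1, None) e.
  by move=> H He; apply: (H `|edge_size e|%N) => //; lia.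
elim=> [|n IH] [x y] He; have [/farey_adj_pm1 /= hD hx hy n1 n2] := He;
  have [hdx sx] := pos_half_coords hx; have [hdy sy] := pos_half_coords hy;
  rewrite /edge_size /= => hs; first by lia.
have [[le_n le_d]|[le_n le_d]] := farey_pair_comparable hx hdx hy hdy hD n1 n2.
- case: (pos_edge_descent He le_n le_d) => [[-> [->|->]] // | [w [Pw Tw sw]]].
  by apply: T_chain_step (IH _ Pw _) He Tw; move: sw; rewrite /edge_size /=; lia.
- case: (pos_edge_descent (pos_edge_swap He) le_n le_d) => [[-> [->|->]] // | [w [Pw Tw sw]]].
  apply: T_chain_step (IH _ (pos_edge_swap Pw) _) He _.
    by move: sw; rewrite /edge_size /=; lia.
  exact: T_adj_swapr (T_adj_swapl Tw).
Qed.

Lemma pos_edge_quadribone e z : pos_edge e -> quadribone e z -> pos_half z.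
Proof.
case: e => x y [] /= Hxy hx hy n1 n2; move: (Hxy) => /farey_adj_pm1 hD.
have [hdx _] := pos_half_coords hx; have [hdy _] := pos_half_coords hy.
have := farey_adj_comb_neq0 (or_introl erefl) Hxy; rewrite !mul1r => nz_sum.
have := farey_adj_comb_neq0 (or_intror erefl) Hxy; rewrite !mulN1r => nz_diff.
rewrite /pos_half in hx hy *; case=> [->|[->|[->|->]]] //=.
  by apply: bnum_bpt_ge0 => //; lia.
have [[? ?]|[? ?]] := farey_pair_comparable hx hdx hy hdy hD n1 n2.
  by apply: bnum_bpt_ge0 => //; lia.
by rewrite -bptN; apply: bnum_bpt_ge0; rewrite ?oppr_eq0 //; lia.
Qed.

(* A point p/q with p, q > 0 is an endpoint of the Farey edge to (r + t p)/(s + t q),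
   where p s - q r = 1 and t = |r| + |s| makes that second endpoint positive. *)
Lemma pos_half_covered z : pos_half z -> exists e, pos_edge e /\ quadribone e z.
Proof.
have [P1i _ _ P01] := pos_edge_base.
move=> hz; case: (eqVneq (bden z) 0) => [d0|dn].
  exists (Some 1, None); split => //; right; left.
  by apply: coords_inj; rewrite ?d0 ?(bnum_bden0 d0).
case: (eqVneq (bnum z) 0) => [n0|nn].
  exists (Some 0, Some 1); split => //; left.
  by case: z hz dn n0 => [r|] //= _ _ /eqP; rewrite numq_eq0 => /eqP ->.
have [hd _] := pos_half_coords hz; rewrite /pos_half in hz.
have [r [s hrs]] := bezout_coords z.
set p := bnum z in hz nn hrs *; set q := bden z in hd dn hrs *.
set t := `|r| + `|s|.
have [tp tq] : t <= t * p /\ t <= t * q by split; nia.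
set y := bpt (r + t * p) (s + t * q).
have [yn yd] : bnum y = r + t * p /\ bden y = s + t * q.
  by apply: (@bpt_primitive _ _ p q); rewrite /t in tp tq *; lia.
exists (z, y); split; last by left.
split; rewrite /= ?yn ?yd -/p -/q //.
- by rewrite /farey_edge /farey_adj /= yn yd -/p -/q; lia.
- by rewrite /pos_half yn /t in tp *; lia.
- by case=> /eqP; rewrite (negbTE dn).
- by case=> /eqP; rewrite (negbTE nn).
Qed.

Lemma connectedB_pos_half : connectedB pos_half.
Proof.
exists pos_edge; split; first split.
- by move=> e [].
- move=> e f /pos_edge_chain He /pos_edge_chain Hf.
  exact: T_chain_trans (T_chain_sym He) Hf.
- move=> z; split; first exact: pos_half_covered.
  by case=> e [He Hq]; apply: pos_edge_quadribone He Hq.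
Qed.

(** * Matrices with positive entries *)

Lemma no_halving_seq (s : nat -> int) :
  (forall j, 1 <= s j) -> ~ (forall j, 2 * s j.+1 <= s j).
Proof.
move=> s_ge1 s_half.
have bound j : 2 ^+ j * s j <= s 0%N.
  elim: j => [|j IH]; first by rewrite mul1r.
  have := s_half j; have : 0 <= 2 ^+ j :> int by apply: exprn_ge0.
  by rewrite exprS; nia.
have pow j : j%:Z < 2 ^+ j :> int.
  by elim: j => [|j IH] //; rewrite exprS; lia.
by have := bound `|s 0%N|%N; have := pow `|s 0%N|%N; have := s_ge1 `|s 0%N|%N; nia.
Qed.

Section PositiveMatrix.
Variables a b c d : int.
Hypotheses (ha : 0 <= a) (hb : 1 <= b) (hc : 1 <= c) (hd : 0 <= d).
Hypothesis det : a * d - b * c = 1.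

Let ha1 : 1 <= a. Proof. nia. Qed.
Let hd1 : 1 <= d. Proof. nia. Qed.
Let U : unimodular a b c d. Proof. by left. Qed.
Let Ui : unimodular d (- b) (- c) a. Proof. exact: unimodular_adj. Qed.
Let M := mobius a b c d.
Let Mi := mobius d (- b) (- c) a.
Let MiK : cancel M Mi. Proof. exact: mobius_adjK. Qed.
Let MKi : cancel Mi M. Proof. exact: mobius_adjKV. Qed.

Lemma pos_mobius_coords y : pos_half y ->
  bnum (M y) = a * bnum y + b * bden y /\ bden (M y) = c * bnum y + d * bden y.
Proof.
move=> Py; have [hq hs] := pos_half_coords Py; rewrite /pos_half in Py.
have [e [[->|->] E1 E2]] := mobius_coords y U; first by rewrite !mul1r in E1 E2.
by have := bden_ge0 (M y); move: E2; rewrite /M; nia.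
Qed.

Lemma pos_mobius_gt0 y : pos_half y -> 0 < bnum (M y) /\ 0 < bden (M y).
Proof.
move=> Py; have [-> ->] := pos_mobius_coords Py.
by have := pos_half_coords Py; rewrite /pos_half in Py; nia.
Qed.

Lemma pos_half_mobius y : pos_half y -> pos_half (M y).
Proof. by move=> /pos_mobius_gt0 [? _]; rewrite /pos_half; lia. Qed.

(* Under M^-1 the size p + q of a point of [0, oo] at least halves. *)
Lemma pos_half_mobius_inv_escapes x : ~ (forall j, pos_half (iter j Mi x)).
Proof.
move=> H; apply: (@no_halving_seq (fun j => bnum (iter j Mi x) + bden (iter j Mi x))).
  by move=> j; have [] := pos_half_coords (H j).
move=> j; rewrite -[in X in _ <= X](MKi (iter j Mi x)) -iterS.
have [-> ->] := pos_mobius_coords (H j.+1).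
by have := pos_half_coords (H j.+1); have := H j.+1; rewrite /pos_half; nia.
Qed.

(* Off [0, oo] the gap q - p at least halves under M. *)
Lemma pos_half_mobius_reached x : exists p, pos_half (iter p M x).
Proof.
apply: NNPP => H.
have neg j : bnum (iter j M x) < 0 /\ 0 < bden (iter j M x).
  by apply: not_pos_half_coords => P; apply: H; exists j.
apply: (@no_halving_seq (fun j => bden (iter j M x) - bnum (iter j M x))).
  by move=> j; have := neg j; lia.
move=> j; rewrite -[in X in _ <= X](MiK (iter j M x)) -iterS.
have [e [He E1 E2]] := mobius_coords (iter j.+1 M x) Ui.
have := neg j.+1; have := bden_ge0 (Mi (iter j.+1 M x)).
by move: E1 E2; rewrite -/Mi; case: He => ->; nia.
Qed.

Lemma pos_half_mobius_reached_seq (K : seq B) :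
  exists m, forall x, x \in K -> forall p, (m <= p)%N -> pos_half (iter p M x).
Proof.
have stay x p0 p : pos_half (iter p0 M x) -> (p0 <= p)%N -> pos_half (iter p M x).
  move=> H /subnK <-; elim: (p - p0)%N => [|k IH] //.
  by rewrite addSn; apply: pos_half_mobius.
elim: K => [|x K [m Hm]]; first by exists 0%N.
have [p0 Hp0] := pos_half_mobius_reached x.
exists (maxn m p0) => y; rewrite inE => /orP [/eqP -> | yK] p Hp.
  by apply: stay Hp0 _; apply: leq_trans Hp; exact: leq_maxr.
by apply: Hm => //; apply: leq_trans Hp; exact: leq_maxl.
Qed.

(* V n = M^(n+1) [0, oo]. *)
Lemma pos_matrix_vanishing : exists V : nat -> B -> Prop,
  [/\ forall n, connectedB (V n), vanishing M V &
      forall z, V 0%N z -> 0 < bnum z /\ 0 < bden z].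
Proof.
have iterK n x : iter n Mi (iter n M x) = x.
  by elim: n x => [|n IH] x //; rewrite iterSr iterS MiK IH.
exists (fun n z => pos_half (iter n.+1 Mi z)); split.
- elim=> [|n IH]; first exact: connectedB_mobius_preimage Ui connectedB_pos_half.
  have -> : (fun z => pos_half (iter n.+2 Mi z)) = (fun z => pos_half (iter n.+1 Mi (Mi z))).
    by apply: functional_extensionality => z; rewrite iterSr.
  exact: connectedB_mobius_preimage Ui IH.
- split.
  + by move=> n; exists (iter n.+1 M None); rewrite iterK.
  + by move=> n x; rewrite iterS -{2}[iter n.+1 Mi x]MKi => /pos_half_mobius.
  + by move=> x H; apply: (@pos_half_mobius_inv_escapes (Mi x)) => j; rewrite -iterSr.
  + move=> K n; have [m Hm] := pos_half_mobius_reached_seq K.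
    exists (n.+1 + m)%N; split => // x xK.
    by rewrite iterD iterK; apply: Hm.
- by move=> z /= /pos_mobius_gt0; rewrite /Mi MKi.
Qed.

End PositiveMatrix.

(* U_n^- is the image under J = diag(1, -1) of the sets given by
   pos_matrix_vanishing for J M^-1 J = [d b; c a]; it lies in the
   quadrant p < 0 < q, away from U_0^+. *)
Lemma pos_matrix_vanishing_pair a b c d :
  0 <= a -> 1 <= b -> 1 <= c -> 0 <= d -> a * d - b * c = 1 ->
  vanishing_pair a b c d.
Proof.
move=> ha hb hc hd det.
have [Vp [Cp Wp Pp]] := pos_matrix_vanishing ha hb hc hd det.
have det' : d * a - b * c = 1 by rewrite -det; ring.
have [Vm [Cm Wm Pm]] := pos_matrix_vanishing hd hb hc ha det'.
have UJ : unimodular 1 0 0 (-1) by right; ring.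
have JK : cancel (mobius 1 0 0 (-1)) (mobius 1 0 0 (-1)).
  by move=> x; rewrite mobius_comp // -[RHS]mobius1; congr mobius; ring.
exists Vp, (fun n z => Vm n (mobius 1 0 0 (-1) z)); split => //.
split; first by move=> n; apply: connectedB_mobius_preimage.
split => //; split.
  apply: vanishing_conj JK _ Wm => x.
  by rewrite !mobius_comp //; [congr mobius; ring | left].
move=> x [/Pp [? ?] /Pm [? ?]].
have [e [He E1 E2]] := mobius_coords x UJ.
by move: E1 E2; case: He => ->; lia.
Qed.

(** * Reduction to positive matrices *)

Lemma trace_le2_of_mul1 (a d : int) : a * d = 1 -> a + d <= 2.
Proof. by move=> H; case: (pm1_of_mul_pm1 (or_introl H)) => E; move: H; rewrite E; lia. Qed.

Lemma vanishing_pair_same_sign a b c d : a * d - b * c = 1 -> 3 <= a + d ->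
  0 < c * b -> vanishing_pair a b c d.
Proof.
move=> det tr cb.
have ad2 : 2 <= a * d by lia.
have [ha hd] : 0 < a /\ 0 < d by nia.
have [hc|hc] := ltrP 0 c.
  have hb : 0 < b by nia.
  by apply: pos_matrix_vanishing_pair; lia.
have hb : b < 0 by nia.
by apply: vanishing_pair_conjJ => //; apply: pos_matrix_vanishing_pair; lia.
Qed.

Lemma nearest_multiple (e c : int) : c != 0 -> exists k, (2 * c * k - e) ^+ 2 <= c ^+ 2.
Proof.
move=> cn; have c2 : 2 * c != 0 by rewrite mulf_eq0 negb_or cn.
have E := divz_eq e (2 * c); have r0 := modz_ge0 e c2; have r1 := ltz_mod e c2.
set q := (e %/ (2 * c))%Z in E; set r := (e %% (2 * c))%Z in E r0 r1.
rewrite normrM (_ : `|2 : int| = 2) // in r1.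
have [hr|hr] := lerP r `|c|.
  by exists q; rewrite E !expr2; nia.
have [hc|hc] := ltrP 0 c.
  by exists (q + 1); rewrite E !expr2; nia.
by exists (q - 1); rewrite E !expr2; nia.
Qed.

(* Conjugating by a translation, the discriminant identity
   -4 c b' = (2 c k - (a - d))^2 - ((a + d)^2 - 4) bounds the new corner b'. *)
Lemma translation_conj_bound (a b c d : int) :
  a * d - b * c = 1 -> 3 <= a + d -> c != 0 ->
  exists k, c * (b + k * (a - d) - k * k * c) != 0 /\
            - (c * (b + k * (a - d) - k * k * c)) < c * c.
Proof.
move=> det tr cn; have [k Hk] := nearest_multiple (a - d) cn.
exists k; set b' := b + k * (a - d) - k * k * c.
split.
  rewrite mulf_eq0 negb_or cn /=; apply/eqP => b'0.
  have : (a - k * c) * (d + k * c) = 1.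
    by rewrite -det -[LHS]subr0 -[X in _ - X](mulr0 c) -b'0 /b'; ring.
  by move/trace_le2_of_mul1; lia.
have key : - 4 * (c * b') = (2 * c * k - (a - d)) ^+ 2 - ((a + d) ^+ 2 - 4)
                           + 4 * (a * d - b * c - 1) by rewrite /b'; ring.
rewrite det subrr mulr0 addr0 in key.
have : 9 <= (a + d) ^+ 2 by rewrite expr2; nia.
by move: key Hk; rewrite !expr2; nia.
Qed.

(* Induction on |c|: after a translation either b' c > 0, or |b'| < |c| and
   swapping the roles of b and c decreases the measure. *)
Lemma vanishing_pair_trace_ge3 (n : nat) (a b c d : int) : `|c| <= n%:Z ->
  a * d - b * c = 1 -> 3 <= a + d -> vanishing_pair a b c d.
Proof.
elim: n a b c d => [|n IH] a b c d hc det tr;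
  have cn : c != 0 by apply/eqP => c0; move: det; rewrite c0 mulr0 subr0 => /trace_le2_of_mul1; lia.
  by move: cn; rewrite -normr_eq0; lia.
have [k [cb_neq0 cb_bound]] := translation_conj_bound det tr cn.
apply: (@vanishing_pair_conjT k a b c d det).
set b' := b + k * (a - d) - k * k * c in cb_neq0 cb_bound *.
have det' : (a - k * c) * (d + k * c) - b' * c = 1 by rewrite -det /b'; ring.
have tr' : 3 <= (a - k * c) + (d + k * c) by lia.
have [cb_pos|cb_neg] := ltrP 0 (c * b').
  by apply: vanishing_pair_same_sign; rewrite // mulrC.
apply: (vanishing_pair_conjW det'); apply: IH; last by lia.
- have : `|b'| < `|c| by nia.
  lia.
- by rewrite -det'; ring.
Qed.

Theorem mainTheorem7 (a b c d : int) :
  a * d - b * c = 1 -> 2 < `|a + d| ->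
  exists Up Um : nat -> B -> Prop,
    (forall n, connectedB (Up n)) /\ (forall n, connectedB (Um n)) /\
    vanishing (mobius a b c d) Up /\
    vanishing (mobius d (- b) (- c) a) Um /\
    (forall x, ~ (Up 0%N x /\ Um 0%N x)).
Proof.
move=> det tr; have [tr_pos|tr_neg] : 3 <= a + d \/ a + d <= -3 by lia.
  exact: (vanishing_pair_trace_ge3 (n := `|c|%N)).
by apply: vanishing_pairN; apply: (vanishing_pair_trace_ge3 (n := `|c|%N)); lia.
Qed.
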